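(* Let $X$ be a compact metric countable space and $f:X\to X$ a continuous function such that every accumulation point of $X$ is periodic. Let $a$ be an accumulation point of $X$ and $(a_n)_{n\in\mathbb N}$ a sequence in $X$ such that $f^p(a_n)\to f^p(a)$ for some $p\in\mathbb N^*$. If $b\in X$ is a periodic point with $b\in\bigcap_{n\in\mathbb N}\overline{\mathcal O_f(a_n)}$, then $b\in\mathcal O_f(a)$.
   Context: $\mathbb N^*$ denotes the set of free ultrafilters on $\mathbb N$. For $p\in\mathbb N^*$, the $p$-iterate $f^p:X\to X$ is defined by $f^p(x)=p\text{-}\lim_{n\to\infty}f^n(x)$, where $y=p\text{-}\lim x_n$ means $\{n: x_n\in V\}\in p$ for every neighborhood $V$ of $y$. The orbit of $x$ is $\mathcal O_f(x)=\{f^n(x):n\in\mathbb N\}$. A point $x$ is periodic if $f^n(x)=x$ for some $n\ge1$. An accumulation point is a non-isolated point. *)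

From HB Require Import structures.
From mathcomp Require Import all_boot all_order all_algebra.
From mathcomp Require Import all_classical all_reals all_analysis.
Set Implicit Arguments. Unset Strict Implicit. Unset Printing Implicit Defensive.
Import Order.TTheory GRing.Theory Num.Theory.
Local Open Scope classical_set_scope.

Definition free_ultrafilter (p : set (set nat)) : Prop :=
  ~ p set0 /\
  p setT /\
  (forall A B, p A -> p B -> p (A `&` B)) /\
  (forall A B, A `<=` B -> p A -> p B) /\
  (forall A, p A \/ p (~` A)) /\
  (forall A, finite_set A -> ~ p A).

Definition is_plim {X : topologicalType} (p : set (set nat)) (x : nat -> X) (y : X) :=
  forall V, nbhs y V -> p [set n | V (x n)].

(* p-iterate f^p(x) := p-lim f^n(x) (a chosen p-limit; unique in a compact
   Hausdorff space, where it always exists). *)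
Definition piter {X : topologicalType} (p : set (set nat)) (f : X -> X) (x : X) : X :=
  xget x (is_plim p (fun n => iter n f x)).

Definition forbit {X : Type} (f : X -> X) (x : X) : set X :=
  [set iter n f x | n in [set: nat]].

Definition periodic_pt {X : Type} (f : X -> X) (x : X) : Prop :=
  exists n, (0 < n)%N /\ iter n f x = x.

Definition accumulation_point {X : topologicalType} (x : X) : Prop :=
  limit_point [set: X] x.

(* Let ω(y) be the set of cluster points of the orbit of y. In a countable
   compact metric space the nonempty closed set ω(y) has an isolated point z,
   since a nonempty perfect compact set is uncountable. The point z is
   periodic, say with period k, and being isolated in ω(y) it attracts a whole
   subsequence f^(m0 + j k)(y). Hence ω(y) is the cycle of z, the p-limit
   f^p(y) lies on that cycle, and so does every periodic point in the closure
   of the orbit of y. For y = a_n this puts every f^p(a_n) on the finite, hence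
   closed, orbit of b, and therefore also their limit f^p(a); as a is periodic,
   f^p(a) is on the cycle of a, so the cycles of a and b coincide. *)

From mathcomp Require Import all_boot all_order all_algebra.
From mathcomp Require Import all_classical all_reals all_analysis.
Set Implicit Arguments. Unset Strict Implicit. Unset Printing Implicit Defensive.
Import Order.TTheory GRing.Theory Num.Theory.
Local Open Scope classical_set_scope.

Section iterates.
Variables (T : Type) (f : T -> T).

Lemma iter_period_mul z k t : iter k f z = z -> iter (t * k) f z = z.
Proof. by move=> hz; elim: t => [|t IH] //; rewrite mulSn iterD IH hz. Qed.

Lemma iter_period_mod z k t : iter k f z = z -> iter t f z = iter (t %% k) f z.
Proof. by move=> hz; rewrite {1}(divn_eq t k) addnC iterD iter_period_mul. Qed.

Lemma forbit_trans x y w : forbit f x y -> forbit f y w -> forbit f x w.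
Proof. by move=> [m _ <-] [n _ <-]; exists (n + m) => //; rewrite iterD. Qed.

Lemma periodic_forbit_sym x y : periodic_pt f x -> forbit f x y -> forbit f y x.
Proof.
move=> [k [k0 hk]] [i _ <-]; exists (k.-1 * i) => //.
by rewrite -iterD -mulSnr prednK // mulnC iter_period_mul.
Qed.

Lemma periodic_forbitE x k : (0 < k)%N -> iter k f x = x ->
  forbit f x = [set iter i f x | i in `I_k].
Proof.
move=> k0 hk; apply/seteqP; split=> _ [n _ <-]; last by exists n.
by exists (n %% k); [rewrite /= ltn_pmod | rewrite -iter_period_mod].
Qed.

End iterates.

Lemma residue_decomp m0 k m : (m0 <= m)%N ->
  m = ((m - m0) %% k + (m0 + (m - m0) %/ k * k))%N.
Proof. by move=> m0m; rewrite addnCA [X in (m0 + X)%N]addnC -divn_eq subnKC. Qed.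

Lemma residue_quotient_ge m0 k J m : (0 < k)%N -> (m0 + J * k <= m)%N ->
  (J <= (m - m0) %/ k)%N.
Proof.
move=> k0 Jm; rewrite leq_divRL // leq_subRL //.
exact: leq_trans (leq_addr _ _) Jm.
Qed.

Lemma continuous_iter (X : topologicalType) (f : X -> X) :
  continuous f -> forall n, continuous (iter n f).
Proof.
move=> cf; elim=> [|n IH] x //=.
exact: continuous_comp (IH x) (cf _).
Qed.
Arguments continuous_iter {X f} cf n x.

Lemma finite_closed (X : topologicalType) (A : set X) :
  hausdorff_space X -> finite_set A -> closed A.
Proof. by move=> /hausdorff_accessible/accessible_finite_set_closed; apply. Qed.

Lemma periodic_forbit_closed (X : topologicalType) (f : X -> X) x :
  hausdorff_space X -> periodic_pt f x -> closed (forbit f x).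
Proof.
move=> hX [k [k0 hk]]; rewrite (periodic_forbitE k0 hk).
by apply: finite_closed hX _; exact: finite_image.
Qed.

Lemma compact_nested_closed (X : topologicalType) (K : nat -> set X) :
  compact [set: X] -> (forall n, closed (K n)) -> (forall n, K n !=set0) ->
  (forall n, K n.+1 `<=` K n) -> exists x, forall n, K n x.
Proof.
move=> cX cK nK dK.
have anti : {homo K : n m / (n <= m)%N >-> m `<=` n}.
  apply: (homo_leq (r := fun A B => B `<=` A)) => [A|B A C BA CB|n].
  - exact: subset_refl.
  - exact: subset_trans CB BA.
  - exact: dK.
have KF : ProperFilter (filter_from setT K).
  apply: filter_from_proper; last by move=> n _; apply: nK.
  apply: filter_fromT_filter; first by exists 0%N.
  move=> i j; exists (maxn i j) => w Kw.
  by split; apply: (anti _ _ _ _ Kw); rewrite ?leq_maxl ?leq_maxr.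
have [|x [_ Kx]] := cX _ KF; first by exists 0%N.
exists x => n; rewrite (closure_id (K n)).1 //.
by move=> B nB; apply: Kx => //; exists n.
Qed.

Definition omega_limit (X : topologicalType) (u : nat -> X) : set X :=
  [set c | forall N, closure [set u m | m in [set m | (N <= m)%N]] c].

Section omega_limit.
Variables (X : topologicalType) (u : nat -> X).

Lemma omega_limit_closed : closed (omega_limit u).
Proof.
move=> c cc N; apply: closed_closure.
by apply: (closureS _ cc) => v /(_ N).
Qed.

Lemma omega_limit_meet (K : set X) : compact [set: X] -> closed K ->
  (forall N, exists2 m, (N <= m)%N & K (u m)) -> exists c, K c /\ omega_limit u c.
Proof.
move=> cX cK Kinf.
pose visits N := closure [set u m | m in [set m | (N <= m)%N /\ K (u m)]].
have [|||c visc] := @compact_nested_closed X visits cX.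
- by move=> N; apply: closed_closure.
- move=> N; have [m Nm Km] := Kinf N; exists (u m).
  by apply: subset_closure; exists m.
- move=> N; apply: closureS => _ [m [Nm Km] <-].
  by exists m => //; split => //; apply: ltnW.
exists c; split.
  rewrite (closure_id K).1 //; apply: closureS (visc 0%N).
  by move=> _ [m [_ Km] <-].
by move=> N; apply: closureS (visc N) => _ [m [Nm _] <-]; exists m.
Qed.

Lemma omega_limit_subseq (s : nat -> nat) : (forall j, (j <= s j)%N) ->
  omega_limit (u \o s) `<=` omega_limit u.
Proof.
move=> sj c oc N; apply: closureS (oc N) => _ [m Nm <-].
by exists (s m) => //; apply: leq_trans Nm (sj m).
Qed.

Lemma cvg_omega_limit (C : set X) z : compact [set: X] -> closed C ->
  (forall j, C (u j)) -> omega_limit u `&` C `<=` [set z] -> u @ \oo --> z.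
Proof.
move=> cX cC Cu oCz V nV; apply: contrapT => nJ.
have [||w [[Cw nVw] ow]] := @omega_limit_meet (C `&` ~` interior V) cX.
- by apply: closedI => //; apply/open_closedC/open_interior.
- move=> N; apply: contrapT => nm; apply: nJ; exists N => // j Nj /=.
  apply: contrapT => nVj; apply: nm; exists j => //; split => //.
  by move/interior_subset.
- by apply: nVw; rewrite (oCz w (conj ow Cw)).
Qed.

End omega_limit.

Lemma dependent_choice_seq (T : Type) (P : set T) (S : nat -> T -> T -> Prop) :
  P !=set0 -> (forall n x, P x -> exists2 y, P y & S n x y) ->
  exists s : nat -> T, forall n, P (s n) /\ S n (s n) (s n.+1).
Proof.
move=> [x0 Px0] step.
have /choice [F HF] : forall nx : nat * T, exists y, P nx.2 -> P y /\ S nx.1 nx.2 y.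
  move=> [n x]; have [Px|nPx] := pselect (P x); last by exists x.
  by have [y Py Sy] := step n x Px; exists y.
pose s := fix s n := if n is m.+1 then F (m, s m) else x0.
have Ps n : P (s n) by elim: n => //= n /(HF (n, _)) [].
by exists s => n; have [] := HF (n, s n) (Ps n).
Qed.

Definition isolated_in {R : numDomainType} {X : pseudoMetricType R}
    (Q : set X) (z : X) : Prop :=
  exists2 e : R, (0 < e)%R & Q `&` ball z e `<=` [set z].

Section isolated_points.
Variables (R : realType) (X : pseudoMetricType R).
Hypothesis hX : hausdorff_space X.

Lemma ball_separate (x y : X) : x <> y -> exists2 e : R, (0 < e)%R & ~ ball x e y.
Proof.
move=> xy; apply: contrapT => nsep; apply/xy/(close_eq hX).
rewrite ball_close => eps; apply: contrapT => nb; apply: nsep.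
by exists (eps%:num)%R.
Qed.

Lemma perfect_closed_ball_shrink (Q : set X) (c q : X) (r : R) :
  (forall z, Q z -> ~ isolated_in Q z) -> Q c -> (0 < r)%R ->
  exists2 cr : X * R, Q cr.1 /\ (0 < cr.2)%R &
    closed_ball cr.1 cr.2 `<=` closed_ball c r /\ ~ closed_ball cr.1 cr.2 q.
Proof.
move=> perf Qc r0; have r20 : (0 < r / 2)%R by rewrite divr_gt0.
have [c' [Qc' cc' c'q]] : exists c', [/\ Q c', ball c (r / 2)%R c' & c' <> q].
  have [<-|cq] := pselect (c = q); last by exists c; split => //; apply: ballxx.
  apply: contrapT => nc'; apply: (perf c Qc); exists (r / 2)%R => // w [Qw cw].
  by apply: contrapT => wc; apply: nc'; exists w.
have [eps eps0 nq] := ball_separate c'q.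
pose s := Num.min (r / 2)%R eps.
have s0 : (0 < s)%R by rewrite lt_min r20 eps0.
have sub : closed_ball c' (s / 2)%R `<=` ball c' s := subset_closure_half s0.
exists (c', s / 2)%R; first by split => //=; rewrite divr_gt0.
split=> [w /sub c'w | /sub c'q'] /=.
- apply: subset_closure; rewrite (splitr r).
  by apply: ball_triangle cc' (le_ball _ c'w); rewrite ge_min lexx.
- by apply/nq/(le_ball _ c'q'); rewrite ge_min lexx orbT.
Qed.

Lemma countable_closed_isolated (Q : set X) :
  compact [set: X] -> countable [set: X] -> closed Q -> Q !=set0 ->
  exists2 z, Q z & isolated_in Q z.
Proof.
move=> cX /pfcard_geP [X0|[e]] cQ Q0.
  by case: Q0 => x _; have : [set: X] x by []; rewrite X0.
(* Otherwise nested closed balls centred in Q avoid e 0, e 1, ... in turn, and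
   their intersection with Q is empty, against compactness. *)
apply: contrapT => noiso.
have perf z : Q z -> ~ isolated_in Q z by move=> Qz iso; apply: noiso; exists z.
have [||s Hs] := @dependent_choice_seq (X * R) [set cr | Q cr.1 /\ (0 < cr.2)%R]
  (fun n cr cr' => closed_ball cr'.1 cr'.2 `<=` closed_ball cr.1 cr.2 /\
                   ~ closed_ball cr'.1 cr'.2 (e n)).
- by case: Q0 => c Qc; exists (c, 1%R).
- by move=> n [c r] [Qc r0]; exact: perfect_closed_ball_shrink.
have [|||x Kx] := @compact_nested_closed X
  (fun n => Q `&` closed_ball (s n).1 (s n).2) cX.
- by move=> n; apply: closedI => //; apply: closed_ball_closed.
- by move=> n; have [[Qc r0] _] := Hs n; exists (s n).1; split => //; apply: closed_ballxx.
- by move=> n w [Qw /(Hs n).2.1].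
have [n _ enx] := 'surj_e (I : [set: X] x).
by have [_ [_]] := Hs n; rewrite enx; case: (Kx n.+1).
Qed.

End isolated_points.

Section free_ultrafilter.
Variable p : set (set nat).
Hypothesis pu : free_ultrafilter p.

Lemma free_ultrafilter_ge N : p [set m | (N <= m)%N].
Proof.
have [_ [_ [_ [pS [pU pF]]]]] := pu.
have [//|pc] := pU [set m | (N <= m)%N].
exfalso; apply: (pF `I_N) => //; apply: pS pc => m /= nm.
by rewrite ltnNge; apply/negP.
Qed.

Lemma free_ultrafilter_finite_cover k (C : nat -> set nat) (A : set nat) :
  p A -> A `<=` [set m | exists2 r, (r < k)%N & C r m] ->
  exists2 r, (r < k)%N & p (C r).
Proof.
have [p0 [_ [pI [pS [pU _]]]]] := pu.
elim: k A => [|k IH] A pA sA.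
  by exfalso; apply: p0; apply: pS pA => m /sA [].
have [pk|pnk] := pU (C k); first by exists k.
have [|r rk pr] := IH (A `&` ~` C k) (pI _ _ pA pnk).
  move=> m [/sA [r]]; rewrite ltnS leq_eqVlt => /orP [/eqP -> //|rk Cr _].
  by exists r.
by exists r => //; apply: ltnW.
Qed.

Lemma is_plim_unique (X : topologicalType) (x : nat -> X) y1 y2 :
  hausdorff_space X -> is_plim p x y1 -> is_plim p x y2 -> y1 = y2.
Proof.
have [p0 [_ [pI [pS _]]]] := pu.
move=> hX h1 h2; apply: hX => A B nA nB; apply: contrapT => nAB; apply: p0.
by apply: pS (pI _ _ (h1 A nA) (h2 B nB)) => m [Am Bm]; apply: nAB; exists (x m).
Qed.

Lemma piterE (X : topologicalType) (f : X -> X) y w : hausdorff_space X ->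
  is_plim p (fun n => iter n f y) w -> piter p f y = w.
Proof.
move=> hX hw; apply: xget_unique => // w' hw'.
exact: is_plim_unique hX hw' hw.
Qed.

End free_ultrafilter.

Section orbit_limits.
Variables (R : realType) (X : pseudoMetricType R) (f : X -> X).
Hypotheses (hX : hausdorff_space X) (cX : compact [set: X]) (cf : continuous f).

Local Notation omega y := (omega_limit (fun m => iter m f y)).

Lemma omega_periodic y z : (forall x, accumulation_point x -> periodic_pt f x) ->
  omega y z -> periodic_pt f z.
Proof.
move=> hper oz; have [/hper//|niso] := pselect (accumulation_point z).
have [U nU Uz] : exists2 U, nbhs z U & U `<=` [set z].
  apply: contrapT => nU; apply: niso => U nzU; apply: contrapT => nex.
  apply: nU; exists U => // w Uw; apply: contrapT => wz; apply: nex.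
  by exists w; split => //; apply/eqP.
have [_ [[m1 _ <-] /Uz e1]] := oz 0%N U nU.
have [_ [[m2 m12 <-] /Uz e2]] := oz m1.+1 U nU.
exists (m2 - m1)%N; split; first by rewrite subn_gt0.
by rewrite -{1}e1 -iterD subnK ?e2 // ltnW.
Qed.

Lemma omega_isolated_trap y z k (eps : R) : (0 < eps)%R -> omega y z ->
  omega y `&` ball z eps `<=` [set z] -> iter k f z = z ->
  exists m0, forall j, closed_ball z (eps / 2)%R (iter (m0 + j * k) f y).
Proof.
move=> eps0 oz iso hk; pose s := (eps / 2)%R.
have s0 : (0 < s)%R by rewrite divr_gt0.
have omega_s w : omega y w -> closed_ball z s w -> w = z.
  by move=> ow /(subset_closure_half eps0) zw; apply: iso.
have /nbhs_ballP [d0 d00 Hd0] : nbhs z [set w | ball z s (iter k f w)].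
  by apply: (continuous_iter cf k z); rewrite hk; apply: nbhsx_ballx.
pose d := Num.min d0 s; pose U := interior (ball z d).
have nU : nbhs z U.
  apply: open_nbhs_nbhs; split; first exact: open_interior.
  by apply: nbhsx_ballx; rewrite lt_min d00 s0.
have Ud0 : U `<=` ball z d0.
  by move=> w /interior_subset; apply: le_ball; rewrite ge_min lexx.
have Us : U `<=` closed_ball z s.
  move=> w /interior_subset /(@le_ball _ _ _ _ s) zw.
  by apply/subset_closure/zw; rewrite ge_min lexx orbT.
have [N HN] : exists N, forall m, (N <= m)%N ->
    closed_ball z s (iter m f y) -> U (iter m f y).
  apply: contrapT => nN.
  have [||w [[sw nUw] ow]] :=
    @omega_limit_meet X (fun m => iter m f y) (closed_ball z s `&` ~` U) cX.
  - by apply: closedI; [apply: closed_ball_closed | apply/open_closedC/open_interior].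
  - move=> N; apply: contrapT => nm; apply: nN; exists N => m Nm sm.
    by apply: contrapT => nUm; apply: nm; exists m.
  - by apply: nUw; rewrite (omega_s w ow sw); apply: nbhs_singleton.
have [_ [[m0 Nm0 <-] Um0]] := oz N U nU.
exists m0; suff inU j : U (iter (m0 + j * k) f y) by move=> j; apply: Us.
(* f^k maps U into ball z s, where the orbit after time N can only be in U. *)
elim: j => [|j IH]; first by rewrite mul0n addn0.
rewrite mulSn addnCA; apply: HN.
  by apply: leq_trans Nm0 _; rewrite addnCA leq_addr.
by rewrite iterD; apply/subset_closure/Hd0/Ud0.
Qed.

Lemma orbit_subseq_cvg_periodic y : countable [set: X] ->
  (forall x, accumulation_point x -> periodic_pt f x) ->
  exists z k m0, [/\ (0 < k)%N, iter k f z = z &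
    (fun j => iter (m0 + j * k) f y) @ \oo --> z].
Proof.
move=> ctX hper.
have [|c [_ oc]] := @omega_limit_meet X (fun m => iter m f y) setT cX closedT.
  by move=> N; exists N.
have [z oz [eps eps0 iso]] :=
  countable_closed_isolated hX cX ctX
    (@omega_limit_closed X (fun m => iter m f y)) (ex_intro _ c oc).
have [k [k0 hk]] := omega_periodic hper oz.
have [m0 trap] := omega_isolated_trap eps0 oz iso hk.
exists z, k, m0; split => //.
apply: (@cvg_omega_limit X _ (closed_ball z (eps / 2)%R) z cX _ trap).
  exact: closed_ball_closed.
move=> w [ow cw]; apply: iso; split; last exact: subset_closure_half cw.
apply: (omega_limit_subseq (s := fun j => (m0 + j * k)%N)) ow => j.
exact: leq_trans (leq_pmulr j k0) (leq_addl m0 _).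
Qed.

Lemma periodic_closure_forbit_omega y b : periodic_pt f b ->
  closure (forbit f y) b -> omega y b.
Proof.
move=> [l [l0 hl]] cb N.
have orbitU : forbit f y = [set iter m f y | m in `I_N] `|`
    [set iter m f y | m in [set m | (N <= m)%N]].
  apply/seteqP; split=> [_ [m _ <-]|_ [[m _ <-]|[m _ <-]]]; try by exists m.
  by have [mN|Nm] := ltnP m N; [left|right]; exists m.
move: cb; rewrite orbitU closureU -(closure_id _).1; last first.
  by apply: finite_closed hX _; exact: finite_image.
case=> [[m _ bm]|//]; apply: subset_closure.
exists (N * l + m)%N; first by rewrite /= (leq_trans (leq_pmulr N l0)) ?leq_addr.
by rewrite iterD bm iter_period_mul.
Qed.

Lemma omega_subseq_forbit y z k m0 : (0 < k)%N -> iter k f z = z ->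
  (fun j => iter (m0 + j * k) f y) @ \oo --> z -> omega y `<=` forbit f z.
Proof.
move=> k0 hk cv c oc; apply: contrapT => nc.
have /nbhs_ballP [eta eta0 Heta] : nbhs c (~` forbit f z).
  apply: open_nbhs_nbhs; split=> //; apply: closed_openC.
  exact: periodic_forbit_closed hX (ex_intro _ k (conj k0 hk)).
pose e := (eta / 2)%R.
have e0 : (0 < e)%R by rewrite divr_gt0.
have near_cycle : \forall j \near \oo, forall r : 'I_k,
    ball (iter r f z) e (iter r f (iter (m0 + j * k) f y)).
  apply: filter_forall => r.
  exact: (cvg_comp _ _ cv (continuous_iter cf r z) _ (nbhsx_ballx _ _ e0)).
have [J _ HJ] := near_cycle.
have [_ [[m Jm <-] cm]] := oc (m0 + J * k)%N _ (nbhsx_ballx c e e0).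
have m0m : (m0 <= m)%N by apply: leq_trans (leq_addr _ _) Jm.
pose r := Ordinal (ltn_pmod (m - m0) k0).
apply: (Heta (iter r f z)); last by exists r.
have := HJ _ (residue_quotient_ge k0 Jm) r; rewrite -iterD -residue_decomp //.
by move/ball_sym; rewrite (splitr eta); apply: ball_triangle cm.
Qed.

Lemma piter_periodic_subseq p y z k m0 : free_ultrafilter p -> (0 < k)%N ->
  iter k f z = z -> (fun j => iter (m0 + j * k) f y) @ \oo --> z ->
  exists r, piter p f y = iter r f z.
Proof.
move=> pu k0 hk cv.
(* p contains one residue class of m - m0 modulo k, along which the orbit of
   y tends to f^r z. *)
pose C r := [set m | (m0 <= m)%N /\ (m - m0) %% k = r].
have [|r _ pr] := @free_ultrafilter_finite_cover p pu k C _ (free_ultrafilter_ge pu m0).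
  by move=> m m0m; exists ((m - m0) %% k)%N; rewrite ?ltn_pmod.
exists r; apply: (piterE pu hX) => V nV.
have [J _ HJ] := cvg_comp _ _ cv (continuous_iter cf r z) _ nV.
have [_ [_ [pI [pS _]]]] := pu.
apply: pS (pI _ _ pr (free_ultrafilter_ge pu (m0 + J * k))) => m [[m0m hr] Jm] /=.
rewrite (residue_decomp k m0m) hr iterD.
exact: HJ _ (residue_quotient_ge k0 Jm).
Qed.

End orbit_limits.

Theorem theorem3p10 (R : realType) (X : pseudoMetricType R)
  (f : X -> X) (p : set (set nat)) (a : X) (an : nat -> X) (b : X) :
  hausdorff_space X ->
  compact [set: X] ->
  countable [set: X] ->
  continuous f ->
  (forall x : X, accumulation_point x -> periodic_pt f x) ->
  free_ultrafilter p ->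
  accumulation_point a ->
  (fun n => piter p f (an n)) @ \oo --> piter p f a ->
  periodic_pt f b ->
  (forall n, closure (forbit f (an n)) b) ->
  forbit f a b.
Proof.
move=> hX cX ctX cf hper pu acca cvg perb clb.
have [ka [ka0 hka]] := hper a acca.
have [ra pa] : exists ra, piter p f a = iter ra f a.
  apply: (piter_periodic_subseq hX cf (m0 := 0) pu ka0 hka).
  have -> : (fun j => iter (0 + j * ka) f a) = fun=> a.
    by apply/funext => j; rewrite add0n iter_period_mul.
  exact: cvg_cst.
have orbit_an n : forbit f b (piter p f (an n)).
  have [z [k [m0 [k0 hk cv]]]] := orbit_subseq_cvg_periodic hX cX cf (an n) ctX hper.
  have [r ->] := piter_periodic_subseq hX cf pu k0 hk cv.
  have zb : forbit f z b := omega_subseq_forbit hX cf k0 hk cv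
    (periodic_closure_forbit_omega hX perb (clb n)).
  apply: forbit_trans (periodic_forbit_sym (ex_intro _ k (conj k0 hk)) zb) _.
  by exists r.
have [j _ bj] := closed_cvg _ (periodic_forbit_closed hX perb) (nearW _ orbit_an) _ cvg.
apply: (@forbit_trans _ _ _ (iter ra f a)); first by exists ra.
by apply: periodic_forbit_sym perb _; exists j => //; rewrite bj pa.
Qed.
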